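(* Let $P$ be a computable probability measure on the binary tree, and let $H(0\mid x)$ denote the best-explanation prediction defined in the context. Then \[ \sum_{x\in\{0,1\}^*} P(x)\,\bigl[P(0\mid x)-H(0\mid x)\bigr]^2<\infty . \] Moreover, this sum is bounded by $O\bigl(K(P)\,2^{1.5K(P)}\bigr)$, where the constant in the $O(\cdot)$ does not depend on $P$.
   Context: A measure (distribution) on the binary tree is a function $P:\{0,1\}^*\to\mathbb{R}_{\ge 0}$ with rational values such that $P(\Lambda)=1$ for the empty word $\Lambda$ and $P(x0)+P(x1)=P(x)$ for every string $x$. It is computable if some algorithm outputs $P(x)$ on input $x$. Conditional probabilities are $P(b\mid x)=P(xb)/P(x)$ for $b\in\{0,1\}$; terms with $P(x)=0$ have weight zero in the sum. $K$ denotes prefix (Kolmogorov) complexity. For a computable measure $Q$, $K(Q)$ is the prefix complexity of $Q$, i.e. the minimal prefix complexity of a program computing $Q$. All logarithms are binary. For a string $x$, a best explanation of $x$ is a computable measure $Q$ minimizing $3K(Q)-\log Q(x)$ over all computable measures; if there are several minimizers, any one is chosen. The prediction is $H(b\mid x)=Q(xb)/Q(x)$, where $Q$ is the chosen best explanation of $x$. *)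

From HB Require Import structures.
From mathcomp Require Import all_boot all_order all_algebra.
From mathcomp Require Import all_classical all_reals all_analysis.
Set Implicit Arguments. Unset Strict Implicit. Unset Printing Implicit Defensive.
Import Order.TTheory GRing.Theory Num.Theory.
Local Open Scope ring_scope.

Definition cpair (x y : nat) : nat := (((x + y) * (x + y).+1)./2 + y)%N.

(* inverse of cpair, enumerating the Cantor diagonals *)
Fixpoint cunpair (z : nat) : nat * nat :=
  match z with
  | 0 => (0, 0)%N
  | z'.+1 => let: (x, y) := cunpair z' in
             if x is x'.+1 then (x', y.+1) else (y.+1, 0%N)
  end.

Inductive prog : Type :=
| Zero | Succ | Fst | Snd
| Comp of prog & prog
| Pair of prog & prog
| Rec of prog & prog
| Mu of prog.

Inductive eval : prog -> nat -> nat -> Prop :=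
| eZero x : eval Zero x 0
| eSucc x : eval Succ x x.+1
| eFst x : eval Fst x (cunpair x).1
| eSnd x : eval Snd x (cunpair x).2
| eComp f g x y z : eval g x y -> eval f y z -> eval (Comp f g) x z
| ePair f g x y z : eval f x y -> eval g x z -> eval (Pair f g) x (cpair y z)
| eRec0 f g x y : eval f x y -> eval (Rec f g) (cpair x 0) y
| eRecS f g x n y z : eval (Rec f g) (cpair x n) y ->
    eval g (cpair x (cpair n y)) z -> eval (Rec f g) (cpair x n.+1) z
| eMu f x n : eval f (cpair x n) 0 ->
    (forall m, (m < n)%N -> exists k, eval f (cpair x m) k.+1) ->
    eval (Mu f) x n.

Fixpoint gnum (c : prog) : nat :=
  match c with
  | Zero => cpair 0 0 | Succ => cpair 1 0 | Fst => cpair 2 0 | Snd => cpair 3 0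
  | Comp f g => cpair 4 (cpair (gnum f) (gnum g))
  | Pair f g => cpair 5 (cpair (gnum f) (gnum g))
  | Rec f g => cpair 6 (cpair (gnum f) (gnum g))
  | Mu f => cpair 7 (gnum f)
  end.

(* bijective encoding of binary strings as naturals (first bit most significant) *)
Definition nat_of_bits (s : seq bool) : nat :=
  foldl (fun n (b : bool) => (n.*2 + 1 + b)%N) 0%N s.

Definition enc_int (z : int) : nat :=
  match z with Posz n => n.*2 | Negz n => n.*2.+1 end.
Definition enc_rat (r : rat) : nat := cpair (enc_int (numq r)) `|denq r|%N.

Definition runs (m : prog) (p : seq bool) (n : nat) : Prop := eval m (nat_of_bits p) n.

Definition prefix_machine (m : prog) : Prop :=
  forall p q y z, runs m p y -> runs m q z -> prefix p q -> p = q.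

Definition optimal_prefix_machine (u : prog) : Prop :=
  prefix_machine u /\
  forall m, prefix_machine m -> exists c : nat,
    forall p n, runs m p n -> exists p', runs u p' n /\ (size p' <= size p + c)%N.

(* K_u(n): length of a shortest u-description of n (0 if none exists). *)
Definition Kpref (u : prog) (n : nat) : nat :=
  let P := fun k : nat => `[< exists p, size p = k /\ runs u p n >] in
  match pselect (exists k, P k) with
  | left h => ex_minn h
  | right _ => 0%N
  end.

Definition is_measure (P : seq bool -> rat) : Prop :=
  P [::] = 1 /\ (forall x, 0 <= P x) /\
  (forall x, P (rcons x false) + P (rcons x true) = P x).

Definition computes (q : prog) (P : seq bool -> rat) : Prop :=
  forall x, eval q (nat_of_bits x) (enc_rat (P x)).

Definition computable_measure (P : seq bool -> rat) : Prop :=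
  is_measure P /\ exists q, computes q P.

Definition Kmeas (u : prog) (Q : seq bool -> rat) : nat :=
  let P := fun k : nat => `[< exists q, computes q Q /\ Kpref u (gnum q) = k >] in
  match pselect (exists k, P k) with
  | left h => ex_minn h
  | right _ => 0%N
  end.

Definition log2 {R : realType} (x : R) : R := ln x / ln 2.

(* Q is a best explanation of x: a computable measure minimizing
   3 K(Q) - log Q(x)  (with -log 0 = +oo, so Q(x) > 0). *)
Definition best_explanation {R : realType} (u : prog) (x : seq bool)
    (Q : seq bool -> rat) : Prop :=
  computable_measure Q /\ 0 < Q x /\
  forall Q', computable_measure Q' -> 0 < Q' x ->
    3 * (Kmeas u Q)%:R - log2 (ratr (Q x) : R)
      <= 3 * (Kmeas u Q')%:R - log2 (ratr (Q' x) : R).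

(* conditional probability P(b | x) = P(xb)/P(x) (0 when P(x) = 0) *)
Definition cond (P : seq bool -> rat) (b : bool) (x : seq bool) : rat :=
  P (rcons x b) / P x.

(* the weighted squared prediction error sum_x P(x) [P(0|x) - H(0|x)]^2,
   where H(.|x) is given by the chosen explanation H x of x *)
Definition pred_error {R : realType} (P : seq bool -> rat)
    (H : seq bool -> (seq bool -> rat)) : \bar R :=
  (\esum_(x in [set: seq bool])
     ((ratr (P x) : R) * (ratr (cond P false x) - ratr (cond (H x) false x)) ^+ 2)%:E)%E.

(* Let Q be the best explanation of x and p a shortest description of Q, so
   |p| = K(Q).  Comparing Q with the competitor P in the definition of a best
   explanation gives P(x) <= 2^(3K(P) - 3|p|) Q(x), and an elementary
   inequality then bounds the x-th term of the sum by
   8 2^(1.5K(P)) 2^(-1.5|p|) times the drop, from x to its two children, of the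
   affinity sqrt(P Q).  For a fixed Q these drops are nonnegative and telescope
   down the tree to at most sqrt(P(Λ) Q(Λ)) = 1.  Since a description determines
   the measure it describes, grouping the x by p leaves
   sum_p 2^(-1.5|p|) <= sum_n 2^n 2^(-1.5n) = 1/(1 - 2^(-1/2)). *)

From Pilot Require Import Defs.
From HB Require Import structures.
From mathcomp Require Import all_boot all_order all_algebra.
From mathcomp Require Import all_classical all_reals all_analysis.
From mathcomp Require Import zify ring lra.
Import Order.TTheory GRing.Theory Num.Theory.

Set Implicit Arguments.
Unset Strict Implicit.
Unset Printing Implicit Defensive.

Local Notation eval := Defs.eval.

(** * Pairing, evaluation and codes *)

Lemma cunpair_diag s y : (y <= s)%N ->
  cunpair ((s * s.+1)./2 + y) = (s - y, y)%N.
Proof.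
have cunpairS z : cunpair z.+1 =
    let: (x, y) := cunpair z in if x is x'.+1 then (x', y.+1) else (y.+1, 0%N).
  by [].
elim: s y => [|s IHs] y; first by rewrite leqn0 => /eqP ->.
have diagS : ((s.+1 * s.+2)./2 = (s * s.+1)./2 + s.+1)%N.
  rewrite (_ : (s.+1 * s.+2 = s * s.+1 + (s.+1).*2)%N); last by rewrite -muln2; lia.
  by rewrite halfD odd_double andbF add0n doubleK.
elim: y => [|y IHy] le_ys.
  by rewrite addn0 diagS addnS cunpairS IHs ?subnn.
rewrite addnS cunpairS IHy ?(ltnW le_ys) // (_ : s.+1 - y = (s - y).+1)%N //.
by lia.
Qed.

Lemma cpairK x y : cunpair (cpair x y) = (x, y).
Proof. by rewrite /cpair cunpair_diag ?leq_addl // addnK. Qed.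

Lemma cpair_inj x y x' y' : cpair x y = cpair x' y' -> x = x' /\ y = y'.
Proof. by move=> E; have := cpairK x y; rewrite E cpairK => -[-> ->]. Qed.

Lemma eval_CompE f g x z : eval (Comp f g) x z -> exists2 y, eval g x y & eval f y z.
Proof. by move=> h; inversion h; exists y. Qed.

Lemma eval_PairE f g x w :
  eval (Pair f g) x w -> exists y z, [/\ eval f x y, eval g x z & w = cpair y z].
Proof. by move=> h; inversion h; exists y, z. Qed.

Lemma eval_RecE f g x n y : eval (Rec f g) (cpair x n) y ->
  if n is m.+1 then exists2 w, eval (Rec f g) (cpair x m) w & eval g (cpair x (cpair m w)) y
  else eval f x y.
Proof.
move=> h; inversion h; subst;
  match goal with E : cpair _ _ = cpair _ _ |- _ => case/cpair_inj: E => ? ?; subst end.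
  by [].
by eexists; eassumption.
Qed.

Lemma eval_Rec_pair f g x y : eval (Rec f g) x y -> exists x' n, x = cpair x' n.
Proof. by move=> h; inversion h; [exists x0, 0%N | exists x0, n.+1]. Qed.

Lemma eval_MuE f x n : eval (Mu f) x n ->
  eval f (cpair x n) 0 /\ forall m, (m < n)%N -> exists k, eval f (cpair x m) k.+1.
Proof. by move=> h; inversion h. Qed.

Lemma eval_det f x y z : eval f x y -> eval f x z -> y = z.
Proof.
elim: f x y z => [| | | |f IHf g IHg|f IHf g IHg|f IHf g IHg|f IHf] x y z.
1-4: by move=> h1 h2; inversion h1; inversion h2.
- move=> /eval_CompE[w1 g1 f1] /eval_CompE[w2 g2 f2].
  by move: f1; rewrite (IHg _ _ _ g1 g2) => /IHf; apply.
- move=> /eval_PairE[y1 [z1 [f1 g1 ->]]] /eval_PairE[y2 [z2 [f2 g2 ->]]].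
  by rewrite (IHf _ _ _ f1 f2) (IHg _ _ _ g1 g2).
- move=> h1; have [x' [n Ex]] := eval_Rec_pair h1; subst x.
  elim: n y z h1 => [|n IHn] y z.
    by move=> /eval_RecE f1 /eval_RecE; apply: IHf.
  move=> /eval_RecE[w1 r1 g1] /eval_RecE[w2 r2 g2].
  by move: g1; rewrite (IHn _ _ r1 r2) => /IHg; apply.
- move=> /eval_MuE[fy0 fy] /eval_MuE[fz0 fz].
  case: (ltngtP y z) => // [/fz|/fy] [k fk]; first by have := IHf _ _ _ fy0 fk.
  by have := IHf _ _ _ fz0 fk.
Qed.

Lemma gnum_inj : injective gnum.
Proof.
elim=> [| | | |f IHf g IHg|f IHf g IHg|f IHf g IHg|f IHf]
  [| | | |f' g'|f' g'|f' g'|f'] //= /cpair_inj[] // _;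
  by [case/cpair_inj => /IHf -> /IHg -> | move/IHf ->].
Qed.

Lemma enc_rat_inj : injective enc_rat.
Proof.
have enc_int_inj : injective enc_int.
  by case=> n [] m /=; rewrite -!muln2 => E; first [lia | congr Posz; lia | congr Negz; lia].
move=> r s /cpair_inj[/enc_int_inj num_rs den_rs]; apply/eqP.
rewrite rat_eqE num_rs eqxx /=; apply/eqP.
by rewrite -[denq r]gez0_abs ?(ltW (denq_gt0 r)) // -[denq s]gez0_abs ?(ltW (denq_gt0 s)) // den_rs.
Qed.

Lemma nat_of_bits_rcons x (b : bool) :
  nat_of_bits (rcons x b) = ((nat_of_bits x).*2 + 1 + b)%N.
Proof. by rewrite /nat_of_bits -cats1 foldl_cat. Qed.

Lemma nat_of_bits_eq0 x : nat_of_bits x = 0%N -> x = [::].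
Proof. by case/lastP: x => // x b; rewrite nat_of_bits_rcons addn1. Qed.

Lemma nat_of_bits_inj : injective nat_of_bits.
Proof.
elim/last_ind=> [|x b IHx] y; first by move/esym/nat_of_bits_eq0.
case/lastP: y => [|y c]; first by rewrite nat_of_bits_rcons addn1.
rewrite !nat_of_bits_rcons -!muln2 => E.
have <- : b = c by case: b c E => [] [] /=; lia.
by congr rcons; apply: IHx; lia.
Qed.

Fixpoint bits_of_nat_rec (fuel m : nat) : seq bool :=
  if fuel is fuel'.+1 then
    if m is m'.+1 then rcons (bits_of_nat_rec fuel' m'./2) (odd m') else [::]
  else [::].

Definition bits_of_nat (m : nat) : seq bool := bits_of_nat_rec m m.

Lemma bits_of_natK : cancel bits_of_nat nat_of_bits.
Proof.
suff fuelP fuel m : (m <= fuel)%N -> nat_of_bits (bits_of_nat_rec fuel m) = m.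
  by move=> m; apply: fuelP.
elim: fuel m => [|fuel IHfuel] [|m] //= le_m_fuel.
rewrite nat_of_bits_rcons IHfuel; last by rewrite -divn2; lia.
by rewrite addn1 -[in RHS](odd_double_half m); lia.
Qed.

Lemma nat_of_bitsK : cancel nat_of_bits bits_of_nat.
Proof. by move=> x; apply: nat_of_bits_inj; rewrite bits_of_natK. Qed.

Lemma bits_of_nat_child m (b : bool) :
  bits_of_nat (m.*2 + 1 + b)%N = rcons (bits_of_nat m) b.
Proof. by apply: nat_of_bits_inj; rewrite nat_of_bits_rcons !bits_of_natK. Qed.

(** * Shortest descriptions *)

Fixpoint const_prog (n : nat) : prog :=
  if n is n'.+1 then Comp Succ (const_prog n') else Zero.

Lemma eval_const_prog n x : eval (const_prog n) x n.
Proof. by elim: n x => [|n IHn] x; [exact: eZero | exact: eComp (IHn x) (eSucc n)]. Qed.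

(* [Mu Fst] halts exactly on input [0], the code of the empty string. *)
Definition print_prog (n : nat) : prog := Comp (const_prog n) (Mu Fst).

Lemma print_prog_dom n p y : runs (print_prog n) p y -> p = [::].
Proof.
move=> /eval_CompE[w /eval_MuE[Fst0 _] _]; apply: nat_of_bits_eq0.
by inversion Fst0; rewrite cpairK.
Qed.

Lemma runs_print_prog n : runs (print_prog n) [::] n.
Proof.
apply: (eComp (y := 0%N)); last exact: eval_const_prog.
by apply: eMu => //; exact: (eFst (cpair 0 0)).
Qed.

Lemma print_prog_prefix n : prefix_machine (print_prog n).
Proof. by move=> p q y z /print_prog_dom -> /print_prog_dom ->. Qed.

Lemma optimal_runs_onto u : optimal_prefix_machine u -> forall n, exists p, runs u p n.
Proof.
move=> [_ u_opt] n; have [c simulate] := u_opt _ (@print_prog_prefix n).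
by have [p [? _]] := simulate _ _ (@runs_print_prog n); exists p.
Qed.

Lemma Kpref_attained u n : (exists p, runs u p n) ->
  exists2 p, runs u p n & size p = Kpref u n.
Proof.
move=> [p u_p_n]; rewrite /Kpref; case: pselect => [ex_len|[]]; last first.
  by exists (size p); apply/asboolP; exists p.
by case: ex_minnP => k /asboolP[q [<- ?]] _; exists q.
Qed.

Lemma Kmeas_attained u Q : computable_measure Q ->
  exists2 q, computes q Q & Kpref u (gnum q) = Kmeas u Q.
Proof.
move=> [_ [q q_Q]]; rewrite /Kmeas; case: pselect => [ex_len|[]]; last first.
  by exists (Kpref u (gnum q)); apply/asboolP; exists q.
by case: ex_minnP => k /asboolP[q' [? <-]] _; exists q'.
Qed.

Definition describes (u : prog) (p : seq bool) (Q : seq bool -> rat) : Prop :=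
  exists2 q, computes q Q & runs u p (gnum q).

Lemma shortest_description u Q : optimal_prefix_machine u -> computable_measure Q ->
  exists2 p, describes u p Q & size p = Kmeas u Q.
Proof.
move=> u_opt Q_comp; have [q q_Q <-] := Kmeas_attained u Q_comp.
have [p u_p size_p] := Kpref_attained (optimal_runs_onto u_opt (gnum q)).
by exists p => //; exists q.
Qed.

Lemma describes_inj u p Q Q' : describes u p Q -> describes u p Q' -> Q = Q'.
Proof.
move=> [q q_Q u_p] [q' q'_Q' /(eval_det u_p)/gnum_inj q_q']; subst q'.
by apply: funext => x; apply: enc_rat_inj; exact: eval_det (q_Q x) (q'_Q' x).
Qed.

Local Open Scope ring_scope.

(** * Telescoping sums on the binary tree *)

Lemma ler_sum_subset (R : numDomainType) (T : eqType) (s s' : seq T) (F : T -> R) :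
  uniq s -> uniq s' -> {subset s <= s'} -> (forall i, i \in s' -> 0 <= F i) ->
  \sum_(i <- s) F i <= \sum_(i <- s') F i.
Proof.
move=> s_uniq s'_uniq s_s' F_ge0.
rewrite [leRHS](bigID (mem s)) /= -[X in X + _]big_filter.
have s_perm : perm_eq [seq i <- s' | i \in s] s.
  apply: uniq_perm; rewrite ?filter_uniq // => i.
  by rewrite mem_filter andb_idr //; apply: s_s'.
by rewrite (perm_big _ s_perm) lerDl big_seq_cond sumr_ge0 // => i /andP[/F_ge0].
Qed.

Definition tree_drop (R : zmodType) (G : seq bool -> R) (x : seq bool) : R :=
  G x - G (rcons x false) - G (rcons x true).

Section TreeTelescope.
Variables (R : numDomainType) (G : seq bool -> R).
Hypotheses (G_ge0 : forall x, 0 <= G x) (drop_ge0 : forall x, 0 <= tree_drop G x).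

(* In the breadth-first numbering [bits_of_nat], the children of node [m] are
   [2m+1] and [2m+2], so the first [M] drops telescope to the root minus the
   frontier [M <= j < 2M+1]. *)
Lemma telescope_bits M :
  \sum_(0 <= m < M) tree_drop G (bits_of_nat m)
    + \sum_(M <= j < M.*2.+1) G (bits_of_nat j) = G [::].
Proof.
elim: M => [|M IHM]; first by rewrite big_geq // big_nat1 add0r.
have le_M_2M : (M <= M.*2)%N by rewrite -addnn leq_addr.
rewrite big_nat_recr //= -IHM [in RHS](big_ltn (n := M.*2.+1)) ?ltnS //.
rewrite doubleS (big_nat_recr M.*2.+2) ?(big_nat_recr M.*2.+1) /= ?ltnS ?leqW //.
rewrite /tree_drop -(bits_of_nat_child M false) -(bits_of_nat_child M true).
by rewrite addn0 addn1 addnS addn0; ring.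
Qed.

Lemma sum_tree_drop_le s : uniq s -> \sum_(x <- s) tree_drop G x <= G [::].
Proof.
move=> s_uniq.
have [M ltM] : exists M, forall x, x \in s -> (nat_of_bits x < M)%N.
  exists (\max_(x <- s) nat_of_bits x).+1 => x x_s.
  by rewrite ltnS (leq_bigmax_seq _ x_s).
have frontier_uniq : uniq (map bits_of_nat (iota 0 M)).
  by rewrite map_inj_uniq ?iota_uniq //; apply: can_inj bits_of_natK.
have s_frontier : {subset s <= map bits_of_nat (iota 0 M)}.
  move=> x /ltM x_lt; apply/mapP; exists (nat_of_bits x); last by rewrite nat_of_bitsK.
  by rewrite mem_iota.
apply: le_trans (ler_sum_subset s_uniq frontier_uniq s_frontier _) _ => [x _ //|].
rewrite big_map -[leRHS](telescope_bits M) /index_iota subn0 lerDl.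
by rewrite sumr_ge0.
Qed.

End TreeTelescope.

Lemma sum_pow_size_le (R : numFieldType) (a : R) (s : seq (seq bool)) :
  0 <= a -> 2 * a < 1 -> uniq s -> \sum_(x <- s) a ^+ size x <= (1 - 2 * a)^-1.
Proof.
move=> a_ge0 a_lt s_uniq.
have drop_pow x : tree_drop (fun y => a ^+ size y) x = (1 - 2 * a) * a ^+ size x.
  by rewrite /tree_drop !size_rcons exprS; ring.
have := @sum_tree_drop_le _ (fun y => a ^+ size y) _ _ s s_uniq.
rewrite /= expr0; under eq_bigr do rewrite drop_pow; rewrite -mulr_sumr.
rewrite -ler_pdivlMl ?subr_gt0 // mulr1; apply.
- by move=> x; rewrite exprn_ge0.
- by move=> x; rewrite drop_pow mulr_ge0 ?exprn_ge0 // subr_ge0 ltW.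
Qed.

Lemma sum_partition_seq (R : nmodType) (I J : eqType) (s : seq I) (d : I -> J) (F : I -> R) :
  \sum_(i <- s) F i = \sum_(j <- undup (map d s)) \sum_(i <- s | d i == j) F i.
Proof.
under [RHS]eq_bigr do rewrite big_mkcond.
rewrite exchange_big /= big_seq [RHS]big_seq; apply: eq_bigr => i s_i.
have d_i : d i \in undup (map d s) by rewrite mem_undup map_f.
rewrite -big_mkcond (big_rem (d i)) //= eqxx big1_seq ?addr0 // => j /andP[/eqP <-].
by rewrite mem_rem_uniqF ?undup_uniq.
Qed.

(** * Inequalities for the affinity sqrt(P Q) *)

Section SqrtInequalities.
Variable R : rcfType.
Implicit Types (a b A B r s t u v : R).

Lemma sqrtrM_addr_le a b A B : 0 <= a -> 0 <= b -> 0 <= A -> 0 <= B ->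
  Num.sqrt (a * A) + Num.sqrt (b * B) <= Num.sqrt ((a + b) * (A + B)).
Proof.
move=> a_ge0 b_ge0 A_ge0 B_ge0; rewrite (sqrtrM A) // (sqrtrM B) //.
rewrite -[leLHS]ger0_norm ?addr_ge0 ?mulr_ge0 ?sqrtr_ge0 // -sqrtr_sqr ler_wsqrtr //.
have := sqr_sqrtr a_ge0; have := sqr_sqrtr b_ge0.
have := sqr_sqrtr A_ge0; have := sqr_sqrtr B_ge0.
have := sqr_ge0 (Num.sqrt a * Num.sqrt B - Num.sqrt b * Num.sqrt A).
by move: (Num.sqrt a) (Num.sqrt b) (Num.sqrt A) (Num.sqrt B) => x y X Y; nra.
Qed.

Lemma unit_sqr_sub_le s t u v : 0 <= s -> 0 <= t -> 0 <= u -> 0 <= v ->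
  s ^+ 2 + t ^+ 2 = 1 -> u ^+ 2 + v ^+ 2 = 1 ->
  (s ^+ 2 - u ^+ 2) ^+ 2 <= 8 * (1 - s * u - t * v).
Proof.
move=> s_ge0 t_ge0 u_ge0 v_ge0 st1 uv1.
have s_le1 : s <= 1 by nra.
have u_le1 : u <= 1 by nra.
have su_sqr_le4 : (s + u) ^+ 2 <= 4.
  rewrite (_ : 4 = 2 ^+ 2); last by rewrite expr2; lra.
  by rewrite ler_pXn2r ?nnegrE ?addr_ge0 //; lra.
have : 0 <= (s - u) ^+ 2 * (4 - (s + u) ^+ 2) by rewrite mulr_ge0 ?sqr_ge0 ?subr_ge0.
have := sqr_ge0 (t - v).
have -> : (s ^+ 2 - u ^+ 2) ^+ 2 = (s - u) ^+ 2 * (s + u) ^+ 2 by ring.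
by nra.
Qed.

Lemma cond_sqr_sub_le a b A B r :
  0 <= a -> 0 <= b -> 0 <= A -> 0 <= B -> 0 < a + b -> 0 < A + B -> 0 <= r ->
  a + b <= r ^+ 2 * (A + B) ->
  (a + b) * (a / (a + b) - A / (A + B)) ^+ 2 <=
    8 * r * (Num.sqrt ((a + b) * (A + B)) - Num.sqrt (a * A) - Num.sqrt (b * B)).
Proof.
move=> a_ge0 b_ge0 A_ge0 B_ge0 ab_gt0 AB_gt0 r_ge0 ab_le.
set p := Num.sqrt (a + b); set q := Num.sqrt (A + B).
have p_gt0 : 0 < p by rewrite sqrtr_gt0.
have q_gt0 : 0 < q by rewrite sqrtr_gt0.
pose s := Num.sqrt a / p; pose t := Num.sqrt b / p.
pose u := Num.sqrt A / q; pose v := Num.sqrt B / q.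
have sqr_div (x y : R) : 0 <= x -> 0 < y -> (Num.sqrt x / Num.sqrt y) ^+ 2 = x / y.
  by move=> x_ge0 y_gt0; rewrite expr_div_n !sqr_sqrtr // ltW.
have s2 : s ^+ 2 = a / (a + b) by exact: sqr_div.
have u2 : u ^+ 2 = A / (A + B) by exact: sqr_div.
have st1 : s ^+ 2 + t ^+ 2 = 1 by rewrite s2 sqr_div // -mulrDl divff ?gt_eqF.
have uv1 : u ^+ 2 + v ^+ 2 = 1 by rewrite u2 sqr_div // -mulrDl divff ?gt_eqF.
have [s_ge0 t_ge0 u_ge0 v_ge0] : [/\ 0 <= s, 0 <= t, 0 <= u & 0 <= v].
  by split; rewrite divr_ge0 ?sqrtr_ge0 ?ltW.
have := unit_sqr_sub_le s_ge0 t_ge0 u_ge0 v_ge0 st1 uv1.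
have sqrtM (x X : R) : 0 <= x -> Num.sqrt (x * X) = Num.sqrt x / p * p * (Num.sqrt X / q * q).
  by move=> x_ge0; rewrite sqrtrM // !divfK ?gt_eqF.
rewrite (sqrtrM (A + B)) ?(ltW ab_gt0) // -/p -/q !sqrtM // -/s -/t -/u -/v.
rewrite -s2 -u2 -(sqr_sqrtr (ltW ab_gt0)) -/p => unit_le.
have c_ge0 : 0 <= 1 - s * u - t * v.
  by have := sqr_ge0 (s - u); have := sqr_ge0 (t - v); nra.
have p_le : p <= r * q.
  have : p ^+ 2 <= (r * q) ^+ 2.
    by rewrite exprMn /p /q !sqr_sqrtr ?(ltW ab_gt0) ?(ltW AB_gt0).
  by rewrite ler_pXn2r // nnegrE ?mulr_ge0 // ltW.
have := mulr_ge0 (ltW p_gt0) c_ge0.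
by nra.
Qed.

End SqrtInequalities.

Definition affinity (R : rcfType) (P Q : seq bool -> R) (x : seq bool) : R :=
  Num.sqrt (P x * Q x).

Section Affinity.
Variables (R : rcfType) (P Q : seq bool -> R).
Hypotheses (P_ge0 : forall x, 0 <= P x) (Q_ge0 : forall x, 0 <= Q x).
Hypothesis P_split : forall x, P (rcons x false) + P (rcons x true) = P x.
Hypothesis Q_split : forall x, Q (rcons x false) + Q (rcons x true) = Q x.

Lemma affinity_drop_ge0 x : 0 <= tree_drop (affinity P Q) x.
Proof.
rewrite /tree_drop /affinity -addrA -opprD subr_ge0 -(P_split x) -(Q_split x).
exact: sqrtrM_addr_le.
Qed.

Lemma cond_sqr_err_le x r : 0 < P x -> 0 < Q x -> 0 <= r -> P x <= r ^+ 2 * Q x ->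
  P x * (P (rcons x false) / P x - Q (rcons x false) / Q x) ^+ 2
    <= 8 * r * tree_drop (affinity P Q) x.
Proof. by rewrite /tree_drop /affinity -(P_split x) -(Q_split x); apply: cond_sqr_sub_le. Qed.

End Affinity.

Lemma ratr_measure (R : numFieldType) (P : seq bool -> rat) : is_measure P ->
  [/\ ratr (P [::]) = 1 :> R, forall x, 0 <= ratr (P x) :> R
    & forall x, ratr (P (rcons x false)) + ratr (P (rcons x true)) = ratr (P x) :> R].
Proof.
by case=> P_nil [P_ge0 P_split]; split=> [|x|x]; rewrite ?P_nil ?rmorph1 ?ler0q // -rmorphD P_split.
Qed.

(** * The prediction error of best explanations *)

Section Decay.
Variable R : realType.

Definition decay : R := 2 `^ (- (3 / 2)).

Let ln2_gt0 : 0 < ln (2 : R). Proof. by rewrite ln_gt0 // ltr1n. Qed.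

Let powR2E (y : R) : 2 `^ y = expR (y * ln 2).
Proof. by rewrite /powR pnatr_eq0. Qed.

Lemma decay_gt0 : 0 < decay.
Proof. exact: powR_gt0. Qed.

Lemma two_decay_lt1 : 2 * decay < 1.
Proof.
rewrite /decay powR2E -[X in X * _]lnK ?posrE // -expRD expR_lt1.
by move: ln2_gt0; set l := ln _; lra.
Qed.

Lemma explanation_gap_le (p q : R) (K k : nat) : 0 < p -> 0 < q ->
  3 * k%:R - log2 q <= 3 * K%:R - log2 p ->
  p <= (2 `^ (3 / 2 * K%:R) * decay ^+ k) ^+ 2 * q.
Proof.
move=> p_gt0 q_gt0; rewrite /log2 -(ler_pM2r ln2_gt0) !mulrBl !divfK ?gt_eqF // => gap.
rewrite /decay !powR2E -expRM_natl -expRD -expRM_natl -[q]lnK ?posrE // -expRD.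
by rewrite -[leLHS]lnK ?posrE // ler_expR; lra.
Qed.

End Decay.

Section BestExplanation.
Variables (R : realType) (u : prog).
Hypothesis u_opt : optimal_prefix_machine u.
Variable H : seq bool -> seq bool -> rat.
Hypothesis H_best : forall x, best_explanation (R := R) u x (H x).
Variable P : seq bool -> rat.
Hypothesis P_comp : computable_measure P.

Let sqr_err x : R :=
  ratr (P x) * (ratr (cond P false x) - ratr (cond (H x) false x)) ^+ 2.

Let code x : seq bool := s2val (cid2 (shortest_description u_opt (H_best x).1)).

Let code_describes x : describes u (code x) (H x).
Proof. by rewrite /code; case: cid2. Qed.

Let size_code x : size (code x) = Kmeas u (H x).
Proof. by rewrite /code; case: cid2. Qed.

Let E : R := 2 `^ (3 / 2 * (Kmeas u P)%:R).

Let weight (p : seq bool) : R := E * decay R ^+ size p.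

Let weight_ge0 p : 0 <= weight p.
Proof. by rewrite mulr_ge0 ?powR_ge0 ?exprn_ge0 ?ltW ?decay_gt0. Qed.

Let realP x : R := ratr (P x).
Let realH y x : R := ratr (H y x).

Let drop_ge0 y x : 0 <= tree_drop (affinity realP (realH y)) x.
Proof.
have [_ P_ge0 P_split] := ratr_measure R P_comp.1.
have [_ H_ge0 H_split] := ratr_measure R (H_best y).1.1.
exact: (affinity_drop_ge0 (P := realP) (Q := realH y)).
Qed.

Lemma sqr_err_le x : sqr_err x <= 8 * weight (code x) * tree_drop (affinity realP (realH x)) x.
Proof.
have [H_comp [Hx_gt0 H_opt]] := H_best x.
have [_ P_ge0 P_split] := ratr_measure R P_comp.1.
have [_ H_ge0 H_split] := ratr_measure R H_comp.1.
have := P_comp.1.2.1 x; rewrite le0r => /orP[/eqP Px0 | Px_gt0].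
  by rewrite /sqr_err Px0 rmorph0 mul0r (mulr_ge0 (mulr_ge0 _ (weight_ge0 _))).
rewrite /sqr_err /cond !fmorph_div.
apply: (cond_sqr_err_le (P := realP) (Q := realH x)); rewrite ?ltr0q //.
by apply: explanation_gap_le; rewrite ?ltr0q // size_code; apply: H_opt.
Qed.

Let sum_drop_le1 y s : uniq s -> \sum_(x <- s) tree_drop (affinity realP (realH y)) x <= 1.
Proof.
move=> s_uniq; have [P_nil _ _] := ratr_measure R P_comp.1.
have [H_nil _ _] := ratr_measure R (H_best y).1.1.
have := sum_tree_drop_le (fun x => sqrtr_ge0 _) (drop_ge0 y) s_uniq.
by rewrite /affinity /realP /realH P_nil H_nil mulr1 sqrtr1.
Qed.

Lemma sum_sqr_err_le s : uniq s -> \sum_(x <- s) sqr_err x <= 8 * E / (1 - 2 * decay R).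
Proof.
move=> s_uniq; apply: le_trans (ler_sum _ (fun x _ => sqr_err_le x)) _.
rewrite (sum_partition_seq _ code).
apply: le_trans (_ : _ <= \sum_(p <- undup (map code s)) 8 * weight p) _.
  rewrite big_seq [leRHS]big_seq; apply: ler_sum => _ /[!mem_undup] /mapP[y _ ->].
  rewrite big_mkcond -[leRHS]mulr1; apply: le_trans (ler_wpM2l _ (sum_drop_le1 y s_uniq)).
    rewrite mulr_sumr; apply: ler_sum => x _; case: eqP => [code_xy | _].
      have H_xy : H x = H y by apply: describes_inj (code_describes x) _; rewrite code_xy.
      by rewrite code_xy /realH H_xy.
    by rewrite (mulr_ge0 (mulr_ge0 _ (weight_ge0 _)) (drop_ge0 _ _)).
  by rewrite (mulr_ge0 _ (weight_ge0 _)).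
rewrite -mulr_sumr /weight -mulr_sumr mulrA ler_pM2l ?mulr_gt0 ?powR_gt0 //.
by rewrite sum_pow_size_le ?undup_uniq ?two_decay_lt1 ?(ltW (decay_gt0 R)).
Qed.

Lemma pred_error_le : (pred_error (R := R) P H <= (8 * E / (1 - 2 * decay R))%:E)%E.
Proof.
apply: ge_ereal_sup => _ [X [X_fin _] <-].
by rewrite fsbig_finite //= sumEFin lee_fin sum_sqr_err_le ?finmap.fset_uniq.
Qed.

End BestExplanation.

Theorem theorem3 (R : realType) (u : prog) (hu : optimal_prefix_machine u) :
  exists c : R, 0 < c /\
  forall (H : seq bool -> (seq bool -> rat)),
    (forall x, best_explanation (R := R) u x (H x)) ->
  forall P : seq bool -> rat, computable_measure P ->
    (pred_error (R := R) P H < +oo)%E /\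
    (pred_error (R := R) P H <=
       (c * ((Kmeas u P).+1)%:R * powR 2 (3 / 2 * (Kmeas u P)%:R))%:E)%E.
Proof.
have c_gt0 : 0 < 8 / (1 - 2 * decay R) by rewrite divr_gt0 // subr_gt0 two_decay_lt1.
exists (8 / (1 - 2 * decay R)); split=> // H H_best P P_comp.
have bound := pred_error_le hu H_best P_comp.
split; first exact: le_lt_trans bound (ltry _).
apply: le_trans bound _; rewrite lee_fin mulrAC [leRHS]mulrAC.
by rewrite ler_peMr ?ler1n // mulr_ge0 ?powR_ge0 ?(ltW c_gt0).
Qed.
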